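(* Let $X$ be a Tychonoff space. The following are equivalent: (1) $C_k(X)$ is strictly H-bounded; (2) $C_k(X)$ is H-bounded; (3) $C_k(X)$ is strictly M-bounded; (4) $C_k(X)$ is M-bounded; (5) $X$ is pseudocompact and every compact subset of $X$ is finite.
   Context: $C(X)$ is the set of continuous real-valued functions on $X$, a topological group under pointwise addition with identity the zero function. $C_k(X)$ is $C(X)$ with the compact-open topology (basic neighborhoods of $f$: $\{g:|g(x)-f(x)|<\varepsilon\ \forall x\in K\}$, $K$ compact, $\varepsilon>0$). For a topological group $G$ with identity $e$: $G$ is M-bounded if for every sequence $(U_n)$ of neighborhoods of $e$ there are finite $A_n\subset G$ with $G=\bigcup_n A_nU_n$; H-bounded if for every such sequence there are finite $A_n$ with each $x\in G$ in all but finitely many $A_nU_n$. In the M-game, in round $n$ ONE chooses a neighborhood $U_n$ of $e$ and TWO a finite $A_n\subset G$; TWO wins if $G=\bigcup_nA_nU_n$; $G$ is strictly M-bounded if TWO has a winning strategy. Strictly H-bounded: same game, TWO wins if each $x\in G$ lies in all but finitely many $A_nU_n$, and TWO has a winning strategy. *)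

From Stdlib Require Import Reals List.
Open Scope R_scope.

Definition is_topology {X : Type} (T : (X -> Prop) -> Prop) : Prop :=
  T (fun _ => True) /\
  (forall U V, T U -> T V -> T (fun x => U x /\ V x)) /\
  (forall F : (X -> Prop) -> Prop, (forall U, F U -> T U) ->
      T (fun x => exists U, F U /\ U x)).

Definition closedX {X : Type} (T : (X -> Prop) -> Prop) (F : X -> Prop) : Prop :=
  T (fun x => ~ F x).

Definition continuousX {X : Type} (T : (X -> Prop) -> Prop) (f : X -> R) : Prop :=
  forall x eps, 0 < eps ->
    exists V, T V /\ V x /\ forall y, V y -> Rabs (f y - f x) < eps.

Definition tychonoff {X : Type} (T : (X -> Prop) -> Prop) : Prop :=
  (forall x : X, closedX T (fun y => y = x)) /\
  (forall (F : X -> Prop) (x : X), closedX T F -> ~ F x ->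
     exists f : X -> R, continuousX T f /\ f x = 0 /\
       (forall y, F y -> f y = 1) /\ (forall y, 0 <= f y <= 1)).

Definition compact_set {X : Type} (T : (X -> Prop) -> Prop) (K : X -> Prop) : Prop :=
  forall Cov : (X -> Prop) -> Prop,
    (forall V, Cov V -> T V) ->
    (forall x, K x -> exists V, Cov V /\ V x) ->
    exists l : list (X -> Prop),
      (forall V, In V l -> Cov V) /\ (forall x, K x -> exists V, In V l /\ V x).

Definition finite_set {X : Type} (K : X -> Prop) : Prop :=
  exists l : list X, forall x, K x -> In x l.

Definition pseudocompact {X : Type} (T : (X -> Prop) -> Prop) : Prop :=
  forall f : X -> R, continuousX T f -> exists M, forall x, Rabs (f x) <= M.

Definition CX {X : Type} (T : (X -> Prop) -> Prop) : Type :=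
  { f : X -> R | continuousX T f }.

(* W is a neighbourhood of the zero function in C_k(X): it contains a basic
   neighbourhood {g : |g x| < eps for all x in K}, K compact, eps > 0. *)
Definition nbhd0 {X : Type} (T : (X -> Prop) -> Prop) (W : CX T -> Prop) : Prop :=
  exists K : X -> Prop, compact_set T K /\ exists eps, 0 < eps /\
    forall g : CX T, (forall x, K x -> Rabs (proj1_sig g x) < eps) -> W g.

Definition in_AU {X : Type} (T : (X -> Prop) -> Prop)
    (A : list (CX T)) (U : CX T -> Prop) (g : CX T) : Prop :=
  exists a u, In a A /\ U u /\
    forall x, proj1_sig g x = proj1_sig a x + proj1_sig u x.

Definition M_bounded {X : Type} (T : (X -> Prop) -> Prop) : Prop :=
  forall U : nat -> (CX T -> Prop), (forall n, nbhd0 T (U n)) ->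
    exists A : nat -> list (CX T), forall g, exists n, in_AU T (A n) (U n) g.

Definition H_bounded {X : Type} (T : (X -> Prop) -> Prop) : Prop :=
  forall U : nat -> (CX T -> Prop), (forall n, nbhd0 T (U n)) ->
    exists A : nat -> list (CX T), forall g, exists N, forall n, (N <= n)%nat ->
      in_AU T (A n) (U n) g.

(* Strategies for TWO: in round n, TWO sees ONE's moves U_0,...,U_n
   (perfect information; TWO's own earlier moves are determined by sigma). *)
Definition strategy {X : Type} (T : (X -> Prop) -> Prop) : Type :=
  list (CX T -> Prop) -> list (CX T).

Definition history {X : Type} (T : (X -> Prop) -> Prop)
    (U : nat -> (CX T -> Prop)) (n : nat) : list (CX T -> Prop) :=
  map U (seq 0 (S n)).

Definition strictly_M_bounded {X : Type} (T : (X -> Prop) -> Prop) : Prop :=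
  exists sigma : strategy T,
    forall U : nat -> (CX T -> Prop), (forall n, nbhd0 T (U n)) ->
      forall g, exists n, in_AU T (sigma (history T U n)) (U n) g.

Definition strictly_H_bounded {X : Type} (T : (X -> Prop) -> Prop) : Prop :=
  exists sigma : strategy T,
    forall U : nat -> (CX T -> Prop), (forall n, nbhd0 T (U n)) ->
      forall g, exists N, forall n, (N <= n)%nat ->
        in_AU T (sigma (history T U n)) (U n) g.

(* M-boundedness of C_k(X) forces pseudocompactness: if f is unbounded, a suitable
   continuous function of |f| grows faster along points x_n with |f(x_n)| > n + 1 than the
   finite sets A_n can follow at x_n.  It also forces compact sets to be finite: on an
   infinite compact K one builds, by a geometrically convergent increasing sequence, a
   continuous g that at round n is far on K from every member of A_n.  Conversely, if X is
   pseudocompact and compacta are finite, a neighbourhood of 0 only constrains values on a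
   finite set, so a finite set of functions covers any ball up to it; TWO answers round n
   with a cover of the ball of radius n + 1, and each (bounded) g is eventually caught. *)

From Stdlib Require Import Reals List Lra Lia Classical ClassicalEpsilon
  FunctionalExtensionality PropExtensionality.
Open Scope R_scope.

Lemma increasing_geometric_limit (u : nat -> R) (r : R) : 0 <= r < 1 ->
  (forall n, u n <= u (S n) <= u n + r ^ n) ->
  exists l, forall n, u n <= l <= u n + r ^ n / (1 - r).
Proof.
  intros Hr Hu.
  assert (Htail : forall n k, u (k + n)%nat <= u n + r ^ n / (1 - r)).
  { intros n k. enough (u (k + n)%nat <= u n + (r ^ n - r ^ (k + n)) / (1 - r)).
    { pose proof (pow_le r (k + n) (proj1 Hr)).
      assert ((r ^ n - r ^ (k + n)) / (1 - r) <= r ^ n / (1 - r)); [|lra].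
      unfold Rdiv; apply Rmult_le_compat_r; [apply Rlt_le, Rinv_0_lt_compat|]; lra. }
    induction k as [|k IH]; simpl.
    - replace (r ^ n - r ^ n) with 0 by ring. unfold Rdiv; rewrite Rmult_0_l; lra.
    - destruct (Hu (k + n)%nat) as [_ Hs].
      replace ((r ^ n - r * r ^ (k + n)) / (1 - r))
        with ((r ^ n - r ^ (k + n)) / (1 - r) + r ^ (k + n)) by (field; lra).
      lra. }
  assert (Hgrow : Un_growing u) by (intro n; apply Hu).
  assert (Hub : has_ub u).
  { exists (u 0%nat + r ^ 0 / (1 - r)). intros y [k ->].
    rewrite <- (Nat.add_0_r k). apply Htail. }
  destruct (growing_cv u Hgrow Hub) as [l Hl].
  exists l. intros n. split; [exact (growing_ineq u l Hgrow Hl n)|].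
  apply (Rle_cv_lim (Un := fun k => u (k + n)%nat) (Vn := fun _ => u n + r ^ n / (1 - r))).
  - intros k; simpl; apply Htail.
  - exact (CV_shift' u n l Hl).
  - intros eps Heps. exists 0%nat. intros. unfold R_dist.
    rewrite Rminus_diag, Rabs_R0. exact Heps.
Qed.

Lemma far_endpoint (u v t : R) : 0 < t ->
  exists up : bool, t / 2 <= Rabs (u + (if up then t else 0) - v).
Proof.
  intros Ht. destruct (Rle_dec (t / 2) (Rabs (u + t - v))) as [H|H].
  - exists true; exact H.
  - exists false. revert H. unfold Rabs; repeat destruct Rcase_abs; lra.
Qed.

Lemma list_upper_bound (l : list R) : exists B, 0 <= B /\ forall r, In r l -> r <= B.
Proof.
  induction l as [|a l [B [HB Hl]]].
  - exists 0. split; [lra | intros _ []].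
  - exists (Rmax a B). split; [apply (Rle_trans _ B); [lra | apply Rmax_r]|].
    intros r [<-|Hr]; [apply Rmax_l | apply (Rle_trans _ B); [auto | apply Rmax_r]].
Qed.

Lemma interval_finite_net (a eps : R) (N : nat) : 0 < eps -> exists G : list R,
  forall r, a <= r <= a + INR N * eps -> exists v, In v G /\ Rabs (r - v) < eps.
Proof.
  intros He. induction N as [|N [G HG]].
  - exists (a :: nil). intros r Hr. exists a. split; [left; auto|]. simpl in Hr.
    replace (r - a) with 0 by lra. rewrite Rabs_R0; auto.
  - exists ((a + INR (S N) * eps) :: G). intros r Hr.
    destruct (Rle_dec r (a + INR N * eps)).
    + destruct (HG r) as [v [Hv1 Hv2]]; [lra|]. exists v; split; [right|]; auto.
    + exists (a + INR (S N) * eps); split; [left; auto|]. rewrite S_INR in *.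
      unfold Rabs; destruct Rcase_abs; lra.
Qed.

Lemma bounded_finite_net (r0 eps : R) : 0 < eps -> exists G : list R,
  forall r, Rabs r <= r0 -> exists v, In v G /\ Rabs (r - v) < eps.
Proof.
  intros He. destruct (INR_unbounded (2 * Rabs r0 / eps)) as [N HN].
  destruct (interval_finite_net (- Rabs r0) eps N He) as [G HG]. exists G. intros r Hr.
  apply HG. assert (INR N * eps > 2 * Rabs r0).
  { apply (Rmult_gt_compat_r eps) in HN; auto.
    replace (2 * Rabs r0 / eps * eps) with (2 * Rabs r0) in HN by (field; lra). lra. }
  pose proof (Rabs_pos r0). pose proof (Rle_abs r0).
  revert Hr. unfold Rabs at 1; destruct Rcase_abs; lra.
Qed.

Section Ramp.

Variable c : nat -> R.

Fixpoint ramp (n : nat) (t : R) : R :=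
  match n with
  | O => 0
  | S k => ramp k t + c k * Rmax 0 (t - INR k)
  end.

Lemma ramp_stable (t : R) (N m : nat) : t <= INR N -> ramp (m + N) t = ramp N t.
Proof.
  intros HN. induction m as [|m IH]; [reflexivity|]. simpl. rewrite IH.
  assert (INR N <= INR (m + N)) by (apply le_INR; lia).
  rewrite Rmax_left; [ring | lra].
Qed.

Lemma ramp_eq (t : R) (N M : nat) : t <= INR N -> t <= INR M -> ramp N t = ramp M t.
Proof.
  intros HN HM. destruct (Nat.le_ge_cases N M).
  - replace M with ((M - N) + N)%nat by lia. symmetry; apply ramp_stable; auto.
  - replace N with ((N - M) + M)%nat by lia. apply ramp_stable; auto.
Qed.

Hypothesis c_ge0 : forall k, 0 <= c k.

Lemma ramp_ge0 (n : nat) (t : R) : 0 <= ramp n t.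
Proof.
  induction n as [|n IH]; simpl; [lra|].
  pose proof (Rmult_le_pos _ _ (c_ge0 n) (Rmax_l 0 (t - INR n))). lra.
Qed.

Lemma ramp_ge_coef (n k : nat) (t : R) : (k < n)%nat -> INR k + 1 <= t -> c k <= ramp n t.
Proof.
  intros Hk Ht. induction n as [|n IH]; [lia|]. simpl.
  pose proof (ramp_ge0 n t).
  pose proof (Rmult_le_pos _ _ (c_ge0 n) (Rmax_l 0 (t - INR n))).
  destruct (Nat.eq_dec k n) as [->|Hne].
  - assert (1 <= Rmax 0 (t - INR n)) by (eapply Rle_trans; [|apply Rmax_r]; lra).
    pose proof (c_ge0 n). nra.
  - assert (c k <= ramp n t) by (apply IH; lia). lra.
Qed.

End Ramp.

Section ContinuousFunctions.

Context {X : Type} (T : (X -> Prop) -> Prop).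
Hypothesis HT : is_topology T.

Lemma open_ext (U V : X -> Prop) : (forall x, U x <-> V x) -> T U -> T V.
Proof.
  intros H HU. replace V with U; [exact HU|].
  apply functional_extensionality; intro x; apply propositional_extensionality; auto.
Qed.

Lemma continuousX_const (k : R) : continuousX T (fun _ => k).
Proof.
  intros x eps He. exists (fun _ => True). split; [apply HT|split; [exact I|]].
  intros. rewrite Rminus_diag, Rabs_R0; auto.
Qed.

Lemma continuousX_lipschitz2 (f1 f2 : X -> R) (phi : R -> R -> R) (C : R) : 0 <= C ->
  (forall a b a' b', Rabs (phi a b - phi a' b') <= C * (Rabs (a - a') + Rabs (b - b'))) ->
  continuousX T f1 -> continuousX T f2 -> continuousX T (fun x => phi (f1 x) (f2 x)).
Proof.
  intros HC Hphi H1 H2 x eps He.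
  set (e := eps / (2 * (C + 1))).
  assert (He' : 0 < e) by (unfold e; apply Rdiv_lt_0_compat; lra).
  assert (HCe : C * (2 * e) < eps).
  { unfold e. replace (C * (2 * (eps / (2 * (C + 1))))) with (eps * C / (C + 1)) by (field; lra).
    apply (Rmult_lt_reg_r (C + 1)); [lra|]. unfold Rdiv. rewrite Rmult_assoc, Rinv_l; nra. }
  destruct (H1 x e He') as [V1 [HV1 [V1x HV1y]]].
  destruct (H2 x e He') as [V2 [HV2 [V2x HV2y]]].
  exists (fun y => V1 y /\ V2 y). split; [apply HT; auto | split; [auto|]].
  intros y [Y1 Y2]. specialize (HV1y y Y1). specialize (HV2y y Y2).
  eapply Rle_lt_trans; [apply Hphi | nra].
Qed.

Lemma continuousX_affine (f1 f2 : X -> R) (s : R) :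
  continuousX T f1 -> continuousX T f2 -> continuousX T (fun x => f1 x + s * f2 x).
Proof.
  apply (continuousX_lipschitz2 f1 f2 (fun a b => a + s * b) (1 + Rabs s));
    pose proof (Rabs_pos s); [lra|].
  intros a b a' b'. replace (a + s * b - (a' + s * b')) with ((a - a') + s * (b - b')) by ring.
  eapply Rle_trans; [apply Rabs_triang|]. rewrite Rabs_mult.
  pose proof (Rabs_pos (a - a')); pose proof (Rabs_pos (b - b')). nra.
Qed.

Lemma continuousX_max (f1 f2 : X -> R) :
  continuousX T f1 -> continuousX T f2 -> continuousX T (fun x => Rmax (f1 x) (f2 x)).
Proof.
  apply (continuousX_lipschitz2 f1 f2 Rmax 1); [lra|]. intros a b a' b'.
  unfold Rmax; destruct (Rle_dec a b), (Rle_dec a' b'); unfold Rabs; repeat destruct Rcase_abs; lra.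
Qed.

Lemma continuousX_min (f1 f2 : X -> R) :
  continuousX T f1 -> continuousX T f2 -> continuousX T (fun x => Rmin (f1 x) (f2 x)).
Proof.
  apply (continuousX_lipschitz2 f1 f2 Rmin 1); [lra|]. intros a b a' b'.
  unfold Rmin; destruct (Rle_dec a b), (Rle_dec a' b'); unfold Rabs; repeat destruct Rcase_abs; lra.
Qed.

Lemma continuousX_abs_excess (f : X -> R) (k : R) :
  continuousX T f -> continuousX T (fun x => Rmax 0 (Rabs (f x) - k)).
Proof.
  intros Hf. apply (continuousX_lipschitz2 f f (fun a _ => Rmax 0 (Rabs a - k)) 1 ltac:(lra));
    auto.
  intros a b a' b'. pose proof (Rabs_pos (b - b')).
  pose proof (Rabs_triang_inv a a'). pose proof (Rabs_triang_inv a' a).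
  rewrite (Rabs_minus_sym a' a) in *.
  unfold Rmax at 1 2; destruct (Rle_dec 0 (Rabs a - k)), (Rle_dec 0 (Rabs a' - k));
  unfold Rabs at 1; destruct Rcase_abs; lra.
Qed.

Lemma continuousX_local (g : X -> R) :
  (forall x0, exists V h, T V /\ V x0 /\ continuousX T h /\ forall y, V y -> g y = h y) ->
  continuousX T g.
Proof.
  intros Hloc x0 eps He. destruct (Hloc x0) as [V [h [HV [Vx0 [Hh Hgh]]]]].
  destruct (Hh x0 eps He) as [W [HW [Wx0 HWy]]].
  exists (fun y => V y /\ W y). split; [apply HT; auto | split; [auto|]].
  intros y [Vy Wy]. rewrite (Hgh y Vy), (Hgh x0 Vx0). auto.
Qed.

Lemma continuousX_uniform_limit (F : nat -> X -> R) (g : X -> R) :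
  (forall n, continuousX T (F n)) ->
  (forall eps, 0 < eps -> exists n, forall x, Rabs (g x - F n x) < eps) ->
  continuousX T g.
Proof.
  intros HF Hunif x0 eps He.
  destruct (Hunif (eps / 3)) as [n Hn]; [lra|].
  destruct (HF n x0 (eps / 3)) as [V [HV [Vx0 HVy]]]; [lra|].
  exists V. split; [auto | split; [auto|]]. intros y Vy.
  destruct (Rabs_def2 _ _ (Hn y)), (Rabs_def2 _ _ (Hn x0)), (Rabs_def2 _ _ (HVy y Vy)).
  apply Rabs_def1; lra.
Qed.

Lemma continuousX_increasing_geometric_limit (F : nat -> X -> R) (r : R) : 0 <= r < 1 ->
  (forall n, continuousX T (F n)) ->
  (forall n x, F n x <= F (S n) x <= F n x + r ^ n) ->
  exists g, continuousX T g /\ forall n x, F n x <= g x <= F n x + r ^ n / (1 - r).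
Proof.
  intros Hr HF Hinc.
  destruct (choice (fun x l => forall n, F n x <= l <= F n x + r ^ n / (1 - r))
              (fun x => increasing_geometric_limit (fun n => F n x) r Hr (fun n => Hinc n x)))
    as [g Hg].
  exists g. split; [|intros n x; exact (Hg x n)].
  apply (continuousX_uniform_limit F); auto. intros eps He.
  destruct (pow_lt_1_zero r ltac:(rewrite Rabs_right; lra) (eps * (1 - r)) ltac:(nra))
    as [n Hn].
  exists n. intros x. specialize (Hn n (le_n n)). rewrite Rabs_right in Hn by
    (apply Rle_ge, pow_le; lra).
  assert (r ^ n / (1 - r) < eps).
  { apply (Rmult_lt_reg_r (1 - r)); [lra|]. unfold Rdiv. rewrite Rmult_assoc, Rinv_l; lra. }
  destruct (Hg x n). rewrite Rabs_right; lra.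
Qed.

End ContinuousFunctions.

Section TychonoffSpace.

Context {X : Type} (T : (X -> Prop) -> Prop).
Hypotheses (HT : is_topology T) (HX : tychonoff T).

Lemma closedX_list (L : list X) : closedX T (fun y => In y L).
Proof.
  unfold closedX. induction L as [|z L IH].
  - apply (open_ext T (fun _ => True)); [simpl; tauto | apply HT].
  - apply (open_ext T (fun x => ~ x = z /\ ~ In x L)); [|apply HT; auto; apply HX].
    intros x; simpl. split; [intros [A B] [C|C]; auto|].
    intros H; split; intro; apply H; auto.
Qed.

Lemma bump_off_list (L : list X) (x : X) : ~ In x L ->
  exists f, continuousX T f /\ f x = 1 /\ (forall y, In y L -> f y = 0) /\
    (forall y, 0 <= f y <= 1).
Proof.
  intros Hx. destruct (proj2 HX _ x (closedX_list L) Hx) as [f0 [Hc [Hx0 [HL H01]]]].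
  exists (fun y => 1 + (-1) * f0 y). split; [apply continuousX_affine; auto; apply continuousX_const, HT|].
  split; [rewrite Hx0; ring | split].
  - intros y Hy; rewrite HL; auto; ring.
  - intros y; specialize (H01 y); lra.
Qed.

Definition czero : CX T := exist _ (fun _ => 0) (continuousX_const T HT 0).

Lemma list_approximation (L : list X) (eps r : R) : 0 < eps -> exists A : list (CX T),
  forall g : CX T, (forall x, In x L -> Rabs (proj1_sig g x) <= r) ->
  exists a, In a A /\ forall x, In x L -> Rabs (proj1_sig g x - proj1_sig a x) < eps.
Proof.
  intros He. induction L as [|y L [A HA]].
  - exists (czero :: nil). intros g _. exists czero. split; [left; auto | intros x []].
  - destruct (classic (In y L)) as [Hy|Hy].
    { exists A. intros g Hg. destruct (HA g) as [a [Ha1 Ha2]]; [intros; apply Hg; right; auto|].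
      exists a; split; auto. intros x [<-|Hx]; auto. }
    destruct (bump_off_list L y Hy) as [f [Hf [Hfy [HfL _]]]].
    destruct (bounded_finite_net r eps He) as [G HG].
    (* correct the value at y to a net point, leaving L untouched *)
    set (mk := fun (a : CX T) (v : R) => exist (continuousX T)
        (fun z => proj1_sig a z + (v - proj1_sig a y) * f z)
        (continuousX_affine T HT _ _ _ (proj2_sig a) Hf)).
    exists (flat_map (fun a => map (mk a) G) A).
    intros g Hg. destruct (HA g) as [a [Ha1 Ha2]]; [intros; apply Hg; right; auto|].
    destruct (HG (proj1_sig g y) (Hg y (or_introl eq_refl))) as [v [Hv1 Hv2]].
    exists (mk a v). split; [apply in_flat_map; exists a; split; auto; apply in_map; auto|].
    intros x [<-|Hx]; simpl.
    + rewrite Hfy. replace (proj1_sig a y + (v - proj1_sig a y) * 1) with v by ring. auto.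
    + rewrite (HfL x Hx), Rmult_0_r, Rplus_0_r. auto.
Qed.

Lemma pin_at_point (p q : CX T) (f : X -> R) (t : R) (x : X) (up : bool) :
  0 <= t -> continuousX T f -> f x = 1 -> (forall y, 0 <= f y <= 1) ->
  (forall y, proj1_sig p y <= proj1_sig q y <= proj1_sig p y + t) ->
  exists q' : CX T,
    (forall y, proj1_sig p y <= proj1_sig q' y <= proj1_sig p y + t) /\
    proj1_sig q' x = proj1_sig p x + (if up then t else 0) /\
    (forall y, f y = 0 -> proj1_sig q' y = proj1_sig q y).
Proof.
  destruct p as [p Hp], q as [q Hq]; simpl. intros Ht Hf Hfx Hf01 Hpq.
  assert (Hrange : forall y, 0 <= t * f y <= t) by (intros y; specialize (Hf01 y); nra).
  destruct up.
  - exists (exist _ (fun y => Rmax (q y) (p y + t * f y))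
             (continuousX_max T HT _ _ Hq (continuousX_affine T HT _ _ t Hp Hf))); simpl.
    split; [|split].
    + intros y. specialize (Hpq y). specialize (Hrange y).
      split; [eapply Rle_trans; [|apply Rmax_l]; lra | apply Rmax_lub; lra].
    + rewrite Hfx, Rmult_1_r. apply Rmax_right. specialize (Hpq x); lra.
    + intros y Hy. rewrite Hy, Rmult_0_r, Rplus_0_r. apply Rmax_left, Hpq.
  - set (g := fun y => 1 + (-1) * f y).
    assert (Hg : continuousX T g) by (apply continuousX_affine; auto; apply continuousX_const, HT).
    exists (exist _ (fun y => Rmin (q y) (p y + t * g y))
             (continuousX_min T HT _ _ Hq (continuousX_affine T HT _ _ t Hp Hg))); simpl.
    unfold g. split; [|split].
    + intros y. specialize (Hpq y). specialize (Hrange y).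
      split; [apply Rmin_glb; lra | eapply Rle_trans; [apply Rmin_l | lra]].
    + rewrite Hfx, Rmin_right; [ring | specialize (Hpq x); lra].
    + intros y Hy. rewrite Hy, Rmin_left; [auto | specialize (Hpq y); lra].
Qed.

Lemma separate_from_list (K : X -> Prop) (t : R) : 0 < t ->
  (forall W : list X, exists x, K x /\ ~ In x W) ->
  forall (p : CX T) (B : list (CX T)), exists q : CX T,
    (forall y, proj1_sig p y <= proj1_sig q y <= proj1_sig p y + t) /\
    forall a, In a B -> exists x, K x /\ t / 2 <= Rabs (proj1_sig q x - proj1_sig a x).
Proof.
  intros Ht Hinf p B.
  enough (H : exists (q : CX T) (W : list X), (forall y, proj1_sig p y <= proj1_sig q y <= proj1_sig p y + t) /\
      forall a, In a B -> exists x, K x /\ In x W /\ t / 2 <= Rabs (proj1_sig q x - proj1_sig a x)).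
  { destruct H as [q [W [Hq HW]]]. exists q. split; auto.
    intros a Ha. destruct (HW a Ha) as [x [Kx [_ Hx]]]. eauto. }
  induction B as [|a B [q [W [Hq HW]]]].
  - exists p, nil. split; [intros; lra | intros _ []].
  - destruct (Hinf W) as [x [Kx Hx]].
    destruct (bump_off_list W x Hx) as [f [Hf [Hfx [HfW Hf01]]]].
    destruct (far_endpoint (proj1_sig p x) (proj1_sig a x) t Ht) as [up Hup].
    destruct (pin_at_point p q f t x up ltac:(lra) Hf Hfx Hf01 Hq) as [q' [Hq' [Hq'x Hq'W]]].
    exists q', (x :: W). split; auto.
    intros b [<-|Hb].
    + exists x. rewrite Hq'x. split; [auto | split; [left|]; auto].
    + destruct (HW b Hb) as [y [Ky [Wy Hy]]]. exists y. rewrite (Hq'W y (HfW y Wy)).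
      split; [auto | split; [right|]; auto].
Qed.

End TychonoffSpace.

Lemma singleton_compact {X : Type} (T : (X -> Prop) -> Prop) (z : X) :
  compact_set T (fun y => y = z).
Proof.
  intros Cov _ Hcov. destruct (Hcov z eq_refl) as [V [HV Vz]]. exists (V :: nil). split.
  - intros W [<-|[]]; auto.
  - intros x ->. exists V; split; [left|]; auto.
Qed.

Lemma history_length {X : Type} (T : (X -> Prop) -> Prop) (U : nat -> CX T -> Prop) (n : nat) :
  length (history T U n) = S n.
Proof. unfold history. rewrite length_map, length_seq. reflexivity. Qed.

Lemma history_last {X : Type} (T : (X -> Prop) -> Prop) (U : nat -> CX T -> Prop) (n : nat)
  (d : CX T -> Prop) : last (history T U n) d = U n.
Proof. unfold history. rewrite seq_S, map_app. simpl. apply last_last. Qed.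

Section Characterization.

Context {X : Type} (T : (X -> Prop) -> Prop).
Hypotheses (HT : is_topology T) (HX : tychonoff T).

Definition ball_covered (r : R) (U : CX T -> Prop) (A : list (CX T)) : Prop :=
  forall g : CX T, (forall x, Rabs (proj1_sig g x) <= r) -> in_AU T A U g.

Definition csub (g a : CX T) : CX T :=
  exist _ (fun z => proj1_sig g z + (-1) * proj1_sig a z)
    (continuousX_affine T HT _ _ _ (proj2_sig g) (proj2_sig a)).

Lemma nbhd0_ball_covered (U : CX T -> Prop) (r : R) :
  (forall K, compact_set T K -> finite_set K) -> nbhd0 T U -> exists A, ball_covered r U A.
Proof.
  intros Hfin [K [HK [eps [He HKU]]]]. destruct (Hfin K HK) as [L HL].
  destruct (list_approximation T HT HX L eps r He) as [A HA].
  exists A. intros g Hg. destruct (HA g) as [a [Ha Hga]]; [intros; apply Hg|].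
  exists a, (csub g a). split; [auto | split; [|intros x; simpl; ring]].
  apply HKU. intros x Kx. simpl.
  replace (proj1_sig g x + -1 * proj1_sig a x) with (proj1_sig g x - proj1_sig a x) by ring.
  auto.
Qed.

(* In round n the history has length n + 1, so TWO covers the ball of radius n + 1. *)
Definition ball_strategy : strategy T := fun l =>
  epsilon (inhabits nil) (ball_covered (INR (length l)) (last l (fun _ => True))).

Lemma pseudocompact_finite_compacta_strictly_H_bounded :
  pseudocompact T -> (forall K, compact_set T K -> finite_set K) -> strictly_H_bounded T.
Proof.
  intros Hps Hfin. exists ball_strategy. intros U HU g.
  assert (Hwin : forall n, ball_covered (INR (S n)) (U n) (ball_strategy (history T U n))).
  { intros n. unfold ball_strategy. rewrite history_length, history_last.
    apply epsilon_spec, nbhd0_ball_covered; auto. }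
  destruct (Hps _ (proj2_sig g)) as [M HM]. destruct (INR_unbounded M) as [N HN].
  exists N. intros n Hn. apply Hwin. intros x.
  apply le_INR in Hn. rewrite S_INR. specialize (HM x). lra.
Qed.

Lemma continuousX_ramp_abs (c : nat -> R) (f : X -> R) (n : nat) :
  continuousX T f -> continuousX T (fun x => ramp c n (Rabs (f x))).
Proof.
  intros Hf. induction n as [|n IH]; simpl; [apply continuousX_const, HT|].
  apply continuousX_affine; auto. apply continuousX_abs_excess; auto.
Qed.

(* The locally finite sum of the ramps c k * max(0, |f| - k). *)
Lemma continuousX_dominating (f : X -> R) (c : nat -> R) :
  (forall k, 0 <= c k) -> continuousX T f ->
  exists g, continuousX T g /\ forall n x, INR n + 1 <= Rabs (f x) -> c n <= g x.
Proof.
  intros Hc Hf.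
  destruct (choice (fun t N => t <= INR N)
              (fun t => let (N, HN) := INR_unbounded t in ex_intro _ N (Rlt_le _ _ HN)))
    as [cut Hcut].
  exists (fun x => ramp c (cut (Rabs (f x))) (Rabs (f x))). split.
  - apply continuousX_local; auto. intros x0.
    destruct (INR_unbounded (Rabs (f x0) + 1)) as [N HN].
    destruct (Hf x0 1 Rlt_0_1) as [V [HV [Vx0 HVy]]].
    exists V, (fun y => ramp c N (Rabs (f y))).
    split; [auto | split; [auto | split; [apply continuousX_ramp_abs; auto|]]].
    intros y Vy. apply ramp_eq; [apply Hcut|].
    specialize (HVy y Vy). pose proof (Rabs_triang_inv (f y) (f x0)). lra.
  - intros n x Hx. set (N := Nat.max (S n) (cut (Rabs (f x)))).
    rewrite (ramp_eq c _ _ N); [| apply Hcut |].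
    + apply ramp_ge_coef; auto. lia.
    + apply (Rle_trans _ _ _ (Hcut _)), le_INR. lia.
Qed.

Lemma M_bounded_pseudocompact : M_bounded T -> pseudocompact T.
Proof.
  intros HM f Hf. apply NNPP. intros Hunb.
  assert (Hbig : forall n : nat, exists x, INR n + 1 < Rabs (f x)).
  { intros n. apply NNPP. intros H. apply Hunb. exists (INR n + 1). intros x.
    apply Rnot_lt_le. intro; apply H; eauto. }
  destruct (choice _ Hbig) as [xs Hxs].
  set (U := fun n (h : CX T) => Rabs (proj1_sig h (xs n)) < 1).
  destruct (HM U) as [A HA].
  { intros n. exists (fun y => y = xs n). split; [apply singleton_compact|].
    exists 1. split; [lra|]. intros g Hg. apply Hg; auto. }
  destruct (choice (fun n B => 0 <= B /\ forall r,
              In r (map (fun a => Rabs (proj1_sig a (xs n)) + 1) (A n)) -> r <= B)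
              (fun n => list_upper_bound _)) as [c Hc].
  destruct (continuousX_dominating f c (fun k => proj1 (Hc k)) Hf) as [g [Hg Hgc]].
  destruct (HA (exist _ g Hg)) as [n [a [u [Ha [Hu Hgau]]]]].
  specialize (Hgc n (xs n) (Rlt_le _ _ (Hxs n))).
  assert (Rabs (proj1_sig a (xs n)) + 1 <= c n).
  { apply Hc, in_map_iff. eauto. }
  specialize (Hgau (xs n)). simpl in Hgau. unfold U in Hu.
  pose proof (Rle_abs (proj1_sig a (xs n))). pose proof (Rle_abs (proj1_sig u (xs n))).
  lra.
Qed.

(* With t_n = 4^-n, F (n+1) is t_n / 2 away on K from every member of A_n, and the limit
   stays within t_n / 3 of F (n+1), so it escapes the t_n / 6-neighbourhood of A_n. *)
Lemma M_bounded_compact_finite :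
  M_bounded T -> forall K, compact_set T K -> finite_set K.
Proof.
  intros HM K HK. apply NNPP. intros Hnf.
  assert (Hinf : forall W : list X, exists x, K x /\ ~ In x W).
  { intros W. apply NNPP. intros H. apply Hnf. exists W. intros x Kx.
    apply NNPP. intro; apply H; eauto. }
  set (t := fun n : nat => (/ 4) ^ n).
  assert (Ht : forall n, 0 < t n) by (intros; apply pow_lt; lra).
  set (U := fun n (h : CX T) => forall x, K x -> Rabs (proj1_sig h x) < t n / 6).
  destruct (HM U) as [A HA].
  { intros n. exists K. split; auto. exists (t n / 6). split; [specialize (Ht n); lra|].
    intros g Hg; exact Hg. }
  destruct (choice (fun (np : nat * CX T) (q : CX T) =>
      (forall y, proj1_sig (snd np) y <= proj1_sig q y <= proj1_sig (snd np) y + t (fst np)) /\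
      forall a, In a (A (fst np)) ->
        exists x, K x /\ t (fst np) / 2 <= Rabs (proj1_sig q x - proj1_sig a x))
    (fun np => separate_from_list T HT HX K _ (Ht (fst np)) Hinf (snd np) (A (fst np))))
    as [step Hstep].
  set (F := fix F n := match n with O => czero T HT | S k => step (k, F k) end).
  destruct (continuousX_increasing_geometric_limit T (fun n => proj1_sig (F n)) (/ 4))
    as [g [Hg Hgb]]; [lra | intros n; apply (proj2_sig (F n)) | intros n x; apply (Hstep (n, F n)) |].
  destruct (HA (exist _ g Hg)) as [n [a [u [Ha [Hu Hgau]]]]].
  destruct (proj2 (Hstep (n, F n)) a Ha) as [x [Kx Hx]].
  specialize (Hu x Kx). specialize (Hgau x). specialize (Hgb (S n) x). specialize (Ht n).
  replace ((/ 4) ^ S n / (1 - / 4)) with (t n / 3) in Hgb by (unfold t; simpl; field).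
  change (proj1_sig (F (S n)) x) with (proj1_sig (step (n, F n)) x) in Hgb.
  cbn [fst] in Hx. simpl in Hgau. revert Hx Hu Hgb. unfold Rabs; repeat destruct Rcase_abs; lra.
Qed.

End Characterization.

Lemma strictly_H_bounded_H_bounded {X : Type} (T : (X -> Prop) -> Prop) :
  strictly_H_bounded T -> H_bounded T.
Proof. intros [s Hs] U HU. exists (fun n => s (history T U n)). auto. Qed.

Lemma H_bounded_M_bounded {X : Type} (T : (X -> Prop) -> Prop) : H_bounded T -> M_bounded T.
Proof.
  intros H U HU. destruct (H U HU) as [A HA]. exists A. intros g.
  destruct (HA g) as [N HN]. exists N. apply HN; auto.
Qed.

Lemma strictly_H_bounded_strictly_M_bounded {X : Type} (T : (X -> Prop) -> Prop) :
  strictly_H_bounded T -> strictly_M_bounded T.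
Proof.
  intros [s Hs]. exists s. intros U HU g. destruct (Hs U HU g) as [N HN]. exists N; auto.
Qed.

Lemma strictly_M_bounded_M_bounded {X : Type} (T : (X -> Prop) -> Prop) :
  strictly_M_bounded T -> M_bounded T.
Proof. intros [s Hs] U HU. exists (fun n => s (history T U n)). auto. Qed.

Theorem theorem2p6 (X : Type) (T : (X -> Prop) -> Prop)
  (HT : is_topology T) (HX : tychonoff T) :
  (strictly_H_bounded T <-> H_bounded T) /\
  (H_bounded T <-> strictly_M_bounded T) /\
  (strictly_M_bounded T <-> M_bounded T) /\
  (M_bounded T <->
     (pseudocompact T /\ forall K : X -> Prop, compact_set T K -> finite_set K)).
Proof.
  pose proof (strictly_H_bounded_H_bounded T).
  pose proof (H_bounded_M_bounded T).
  pose proof (strictly_H_bounded_strictly_M_bounded T).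
  pose proof (strictly_M_bounded_M_bounded T).
  pose proof (M_bounded_pseudocompact T HT).
  pose proof (M_bounded_compact_finite T HT HX).
  pose proof (pseudocompact_finite_compacta_strictly_H_bounded T HT HX).
  tauto.
Qed.
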